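(* Let $\mathbf A\in\mathbb C^{m\times n}$, $\mathbf B\in\mathbb C^{m\times s}$, let $\mathbf X_{LS}=(x_{ij})\in\mathbb C^{n\times s}$ be the minimum norm least squares solution of $\mathbf A\mathbf X=\mathbf B$, and let $\hat{\mathbf B}=\mathbf A^{*}\mathbf B$ with $j$-th column $\hat{\mathbf b}_{.j}$. (i) If $\operatorname{rank}\mathbf A=r\le m<n$, then for all $i=1,\dots,n$, $j=1,\dots,s$, \[x_{ij}=\frac{\sum_{\beta\in J_{r,n}\{i\}}\left|\left((\mathbf A^{*}\mathbf A)_{.i}(\hat{\mathbf b}_{.j})\right)^{\beta}_{\beta}\right|}{\sum_{\beta\in J_{r,n}}\left|(\mathbf A^{*}\mathbf A)^{\beta}_{\beta}\right|}.\] (ii) If $\operatorname{rank}\mathbf A=n$, then for all $i=1,\dots,n$, $j=1,\dots,s$, $x_{ij}=\dfrac{\det\left((\mathbf A^{*}\mathbf A)_{.i}(\hat{\mathbf b}_{.j})\right)}{\det(\mathbf A^{*}\mathbf A)}$.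
   Context: $\mathbf X_{LS}$ is the matrix of minimal Frobenius norm among all $\mathbf X\in\mathbb C^{n\times s}$ minimizing the Frobenius norm $\|\mathbf A\mathbf X-\mathbf B\|$. $\mathbf M_{.i}(\mathbf c)$ denotes $\mathbf M$ with its $i$-th column replaced by $\mathbf c$. $J_{r,n}$ is the set of strictly increasing sequences of $r$ elements of $\{1,\dots,n\}$, $J_{r,n}\{i\}=\{\beta\in J_{r,n}:i\in\beta\}$, $\mathbf M^{\beta}_{\beta}$ is the principal submatrix indexed by $\beta$, $|\cdot|$ is the determinant. *)

From HB Require Import structures.
From mathcomp Require Import all_boot all_order all_algebra.
From mathcomp Require Import complex.
From mathcomp Require Import reals.
Set Implicit Arguments. Unset Strict Implicit. Unset Printing Implicit Defensive.
Import Order.TTheory GRing.Theory Num.Theory.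
Local Open Scope ring_scope.

Section Defs.
Variable C : numClosedFieldType.

Definition conjT m n (A : 'M[C]_(m, n)) : 'M[C]_(n, m) := (map_mx Num.conj A)^T.

(* squared Frobenius norm (the Frobenius norm is its square root; minimizing
   either is the same) *)
Definition frob2 m n (M : 'M[C]_(m, n)) : C := \sum_i \sum_j `|M i j| ^+ 2.

Definition is_LS m n s (A : 'M[C]_(m, n)) (B : 'M[C]_(m, s)) (X : 'M[C]_(n, s)) :=
  forall Y : 'M[C]_(n, s), frob2 (A *m X - B) <= frob2 (A *m Y - B).

Definition is_min_norm_LS m n s (A : 'M[C]_(m, n)) (B : 'M[C]_(m, s))
  (X : 'M[C]_(n, s)) :=
  is_LS A B X /\ forall Y, is_LS A B Y -> frob2 X <= frob2 Y.

Definition col_repl m n (M : 'M[C]_(m, n)) (i : 'I_n) (c : 'cV[C]_m) : 'M[C]_(m, n) :=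
  \matrix_(k, l) if l == i then c k 0 else M k l.

(* |M^beta_beta| : determinant of the principal submatrix indexed by beta,
   beta listed in increasing order (enum of a set of ordinals is increasing). *)
Definition pminor n (M : 'M[C]_n) (beta : {set 'I_n}) : C :=
  \det (mxsub (fun k : 'I_#|beta| => enum_val k) (fun k : 'I_#|beta| => enum_val k) M).

End Defs.

(* With H = A^* A, the minimum norm least squares solution is X = A^* W for
   some W with H X = A^* B.  For x = X e_j, Cramer's rule applied to
   (H + t I) x - t x = H x gives the polynomial identity
   det (H + t I)_{.i}(H x) = det (H + t I) x_i - t det (H + t I)_{.i}(x).
   Expanding det (M + diagonal) by principal minors, the coefficient of
   t^(n - r), r = rank A, reads
     sum_{|S| = r, i in S} |(H_{.i}(H x))^S_S|
       = (sum_{|S| = r} |H^S_S|) x_i - sum_{|S| = r+1, i in S} |(H_{.i}(x))^S_S|,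
   and the last sum vanishes since H_{.i}(x) = A^* A_{.i}(W e_j) has rank
   at most r.  Finally the principal minors of H are Gram determinants, hence
   nonnegative, and the one on a maximal independent set of columns of A is
   nonzero, so the denominator is positive. *)

From HB Require Import structures.
From mathcomp Require Import all_boot all_order all_algebra.
From mathcomp Require Import complex reals zify fingroup perm.
Set Implicit Arguments. Unset Strict Implicit. Unset Printing Implicit Defensive.
Import Order.TTheory GRing.Theory Num.Theory.
Local Open Scope ring_scope.

Lemma card_setC_ord n (S : {set 'I_n}) : #|~: S| = (n - #|S|)%N.
Proof. by have := cardsC S; rewrite card_ord; lia. Qed.

Lemma card_set_ord_eq n (S : {set 'I_n}) : (#|S| == n) = (S == setT).
Proof.
by rewrite eqEcard subsetT cardsT card_ord eqn_leq -[n in (_ <= n)%N]card_ord max_card.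
Qed.

Section PrincipalMinors.
Variable R : comNzRingType.

(* Ring-generic versions of [pminor] and [col_repl]; over [C] they are
   convertible to them. *)
Definition principal_minor n (M : 'M[R]_n) (S : {set 'I_n}) : R :=
  \det (mxsub (fun k : 'I_#|S| => enum_val k) (fun k : 'I_#|S| => enum_val k) M).

Definition replace_col m n (M : 'M[R]_(m, n)) (i : 'I_n) (c : 'cV[R]_m) :=
  \matrix_(k, l) if l == i then c k 0 else M k l.

Definition id_except_rows n (M : 'M[R]_n) (S : {set 'I_n}) : 'M[R]_n :=
  \matrix_(i, j) if i \in S then M i j else (i == j)%:R.

Lemma det_mxsub_inj p n (h : 'I_p -> 'I_n) (N : 'M[R]_n) :
  p = n -> injective h -> \det (mxsub h h N) = \det N.
Proof.
move=> e; subst p => h_inj; pose s := perm h_inj.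
have -> : mxsub h h N = row_perm s (col_perm s N).
  by apply/matrixP => i j; rewrite !mxE !permE.
rewrite row_permE col_permE !det_mulmx !det_perm odd_permV.
by rewrite mulrCA -signr_addb addbb mulr1.
Qed.

Lemma det_id_except_rows n (M : 'M[R]_n) (S : {set 'I_n}) :
  \det (id_except_rows M S) = principal_minor M S.
Proof.
pose eS := enum_val (A := mem S); pose eC := enum_val (A := mem (~: S)).
have eS_in a : eS a \in S by exact: (enum_valP (A := mem S)).
have eC_out b : eC b \notin S by have := enum_valP (A := mem (~: S)) b; rewrite inE.
pose h (j : 'I_(#|S| + #|~: S|)) : 'I_n :=
  match split j with inl a => eS a | inr b => eC b end.
have hl a : h (lshift _ a) = eS a by rewrite /h -[lshift _ a]/(unsplit (inl a)) unsplitK.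
have hr b : h (rshift _ b) = eC b by rewrite /h -[rshift _ b]/(unsplit (inr b)) unsplitK.
have eS_eC a b : eS a != eC b by apply: contraNneq (eC_out b) => <-.
have h_inj : injective h.
  move=> j1 j2; rewrite -[j1]splitK -[j2]splitK.
  case: (split j1) => a; case: (split j2) => b; rewrite ?hl ?hr.
  - by move/enum_val_inj ->.
  - by move/eqP; rewrite (negbTE (eS_eC a b)).
  - by move/esym/eqP; rewrite (negbTE (eS_eC b a)).
  - by move/enum_val_inj ->.
have card_split : (#|S| + #|~: S| = n)%N by rewrite cardsC card_ord.
rewrite -(det_mxsub_inj (id_except_rows M S) card_split h_inj).
set Q := mxsub h h _.
have Qdl : dlsubmx Q = 0.
  apply/matrixP => b a; rewrite !mxE hr hl (negbTE (eC_out b)).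
  by rewrite eq_sym (negbTE (eS_eC a b)).
have Qdr : drsubmx Q = 1%:M.
  by apply/matrixP => b b'; rewrite !mxE !hr (negbTE (eC_out b)) (inj_eq enum_val_inj).
have Qul : ulsubmx Q = mxsub (fun k : 'I_#|S| => enum_val k) (fun k => enum_val k) M.
  by apply/matrixP => a a'; rewrite !mxE !hl eS_in.
by rewrite -(submxK Q) Qdl Qdr det_ublock det1 mulr1 Qul.
Qed.

Lemma det_add_diag_mx n (M : 'M[R]_n) (d : 'rV[R]_n) :
  \det (M + diag_mx d) =
  \sum_(S : {set 'I_n}) (\prod_(i in ~: S) d 0 i) * principal_minor M S.
Proof.
rewrite [LHS]/determinant; under eq_bigr => s _.
  rewrite (eq_bigr (fun i => M i (s i) + d 0 i * (i == s i)%:R)); last first.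
    by move=> i _; rewrite !mxE mulr_natr.
  rewrite bigA_distr big_distrr /=.
  over.
rewrite /= exchange_big /=; apply: eq_bigr => S _.
rewrite -det_id_except_rows /determinant big_distrr /=; apply: eq_bigr => s _.
rewrite mulrCA; congr (_ * _).
rewrite [\prod_(i in ~: S) _]big_mkcond -big_split /=; apply: eq_bigr => i _.
by rewrite !mxE in_setC; case: (i \in S); rewrite /= ?mul1r.
Qed.

Lemma det_replace_col n (T : 'M[R]_n) i c :
  \det (replace_col T i c) = (\adj T *m c) i 0.
Proof.
rewrite (expand_det_col _ i) mxE; apply: eq_bigr => k _.
rewrite !mxE eqxx mulrC /cofactor; congr (_ * _); congr (_ * \det _).
by apply/matrixP => a b; rewrite !mxE eq_sym (negbTE (neq_lift i b)).
Qed.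

Lemma replace_col_mulmx k m n (P : 'M[R]_(k, m)) (Q : 'M[R]_(m, n)) i (v : 'cV[R]_m) :
  replace_col (P *m Q) i (P *m v) = P *m replace_col Q i v.
Proof.
apply/matrixP => a l; rewrite !mxE.
by case: eqP => [->|/eqP hl]; apply: eq_bigr => j _; rewrite mxE ?eqxx ?(negbTE hl).
Qed.

Lemma principal_minor_setT n (M : 'M[R]_n) : principal_minor M setT = \det M.
Proof.
rewrite -det_id_except_rows; congr (\det _).
by apply/matrixP => a b; rewrite !mxE in_setT.
Qed.

End PrincipalMinors.

Lemma principal_minor_map (R R' : comNzRingType) (f : {rmorphism R -> R'}) n
    (M : 'M[R]_n) S :
  principal_minor (map_mx f M) S = f (principal_minor M S).
Proof. by rewrite /principal_minor -map_mxsub det_map_mx. Qed.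

Section MinorExpansion.
Variable R : comNzRingType.

Lemma det_add_X n (M : 'M[R]_n) :
  \det (map_mx polyC M + 'X%:M) =
  \sum_(S : {set 'I_n}) 'X^(n - #|S|) * (principal_minor M S)%:P.
Proof.
rewrite -diag_const_mx det_add_diag_mx; apply: eq_bigr => S _.
rewrite principal_minor_map; congr (_ * _).
by under eq_bigr do rewrite mxE; rewrite prodr_const card_setC_ord.
Qed.

Lemma det_replace_col_add_X n (M : 'M[R]_n) i (v : 'cV[R]_n) :
  \det (replace_col (map_mx polyC M + 'X%:M) i (map_mx polyC v)) =
  \sum_(S : {set 'I_n} | i \in S)
     'X^(n - #|S|) * (principal_minor (replace_col M i v) S)%:P.
Proof.
have -> : replace_col (map_mx polyC M + 'X%:M) i (map_mx polyC v) =
    map_mx polyC (replace_col M i v) + diag_mx (\row_l (if l == i then 0 else 'X)).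
  apply/matrixP => k l; rewrite !mxE.
  case: (k =P l) => [<-|_]; last by rewrite !mulr0n !addr0; case: ifP.
  by case: ifP; rewrite ?mulr1n ?addr0.
rewrite det_add_diag_mx [RHS]big_mkcond; apply: eq_bigr => S _.
rewrite principal_minor_map /=; case: ifP => iS; last first.
  by rewrite (bigD1 i) /= ?in_setC ?iS // mxE eqxx !mul0r.
rewrite -card_setC_ord -prodr_const; congr (_ * _); apply: eq_bigr => l.
by rewrite in_setC mxE; case: (l =P i) => // ->; rewrite iS.
Qed.

Lemma coef_sum_minors n (P : pred {set 'I_n}) (c : {set 'I_n} -> R) k :
  (k <= n)%N ->
  (\sum_(S | P S) 'X^(n - #|S|) * (c S)%:P)`_(n - k) =
  \sum_(S | P S && (#|S| == k)) c S.
Proof.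
move=> le_kn; rewrite coef_sum big_mkcondr /=; apply: eq_bigr => S _.
have le_Sn : (#|S| <= n)%N by rewrite -[n in (_ <= n)%N]card_ord max_card.
rewrite mulrC coefCM coefXn.
have -> : (n - k == n - #|S|)%N = (#|S| == k) by apply/eqP/eqP; lia.
by case: eqP; rewrite ?mulr1 ?mulr0.
Qed.

Lemma sum_principal_minors_replace_col n (H : 'M[R]_n) i (x : 'cV[R]_n) r :
  (r <= n)%N ->
  (forall S : {set 'I_n}, #|S| = r.+1 -> principal_minor (replace_col H i x) S = 0) ->
  (\sum_(S : {set 'I_n} | #|S| == r) principal_minor H S) * x i 0 =
  \sum_(S : {set 'I_n} | (#|S| == r) && (i \in S))
     principal_minor (replace_col H i (H *m x)) S.
Proof.
move=> le_rn minor_eq0; pose T := map_mx polyC H + 'X%:M.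
have cramer : \det (replace_col T i (map_mx polyC (H *m x))) =
    \det T * (x i 0)%:P - 'X * \det (replace_col T i (map_mx polyC x)).
  have -> : map_mx polyC (H *m x) = T *m map_mx polyC x - 'X *: map_mx polyC x.
    by rewrite map_mxM mulmxDl mul_scalar_mx addrK.
  rewrite !det_replace_col mulmxBr mulmxA mul_adj_mx mul_scalar_mx -scalemxAr.
  by rewrite !mxE.
have higher_eq0 : ('X * \det (replace_col T i (map_mx polyC x)))`_(n - r) = 0.
  rewrite coefXM; case: eqP => // /eqP; rewrite subn_eq0 -ltnNge => lt_rn.
  rewrite det_replace_col_add_X -subnS coef_sum_minors //.
  by apply: big1 => S /andP[_ /eqP]; apply: minor_eq0.
move/(congr1 (fun p : {poly R} => p`_(n - r))): cramer.
rewrite coefB higher_eq0 subr0 coefMC det_replace_col_add_X det_add_X.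
rewrite !coef_sum_minors // => E.
rewrite [RHS](eq_bigl _ _ (fun S => andbC _ _)) {}E.
by under [in RHS]eq_bigl do rewrite andTb.
Qed.

End MinorExpansion.

Lemma principal_minor_mulmx_rank (F : fieldType) m n (P : 'M[F]_(n, m))
    (Q : 'M[F]_(m, n)) (S : {set 'I_n}) :
  (\rank P < #|S|)%N -> principal_minor (P *m Q) S = 0.
Proof.
rewrite /principal_minor mxsub_mul => lt_PS; apply/eqP; apply: contraLR lt_PS.
rewrite -unitfE -unitmxE -leqNgt => /mxrank_unit <-.
apply: leq_trans (mxrankM_maxl _ _) (mxrankS _).
by apply/row_subP => k; rewrite row_rowsub row_sub.
Qed.

Section GramMatrices.
Variable C : numClosedFieldType.

Lemma conjT_mulmx m n p (P : 'M[C]_(m, n)) (Q : 'M[C]_(n, p)) :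
  conjT (P *m Q) = conjT Q *m conjT P.
Proof. by rewrite /conjT map_mxM trmx_mul. Qed.

Lemma conjTK m n (P : 'M[C]_(m, n)) : conjT (conjT P) = P.
Proof. by apply/matrixP => i j; rewrite !mxE conjCK. Qed.

Lemma conjT0 m n : conjT (0 : 'M[C]_(m, n)) = 0.
Proof. by apply/matrixP => i j; rewrite !mxE conjC0. Qed.

Lemma conjTD m n (P Q : 'M[C]_(m, n)) : conjT (P + Q) = conjT P + conjT Q.
Proof. by apply/matrixP => i j; rewrite !mxE rmorphD. Qed.

Lemma conjTB m n (P Q : 'M[C]_(m, n)) : conjT (P - Q) = conjT P - conjT Q.
Proof. by apply/matrixP => i j; rewrite !mxE rmorphB. Qed.

Lemma conjTZ m n a (P : 'M[C]_(m, n)) : conjT (a *: P) = a^* *: conjT P.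
Proof. by apply/matrixP => i j; rewrite !mxE rmorphM. Qed.

Lemma mxrank_conjT m n (P : 'M[C]_(m, n)) : \rank (conjT P) = \rank P.
Proof. by rewrite /conjT mxrank_tr mxrank_map. Qed.

Lemma mulmx_conjT_eq0 p (v : 'rV[C]_p) : v *m conjT v = 0 -> v = 0.
Proof.
move/matrixP/(_ 0 0); rewrite !mxE => vv_eq0.
have /psumr_eq0P v_eq0 : \sum_k v 0 k * (v 0 k)^* = 0.
  by rewrite -[RHS]vv_eq0; apply: eq_bigr => k _; rewrite !mxE.
apply/matrixP => i j; rewrite ord1 !mxE; apply/eqP.
by rewrite -mul_conjC_eq0 v_eq0 // => k _; apply: mul_conjC_ge0.
Qed.

Lemma mxrank_gram m n (M : 'M[C]_(m, n)) : \rank (conjT M *m M) = \rank M.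
Proof.
apply/eqP; rewrite eqn_leq mxrankM_maxr /=.
have ker_sub : (kermx (conjT M *m M) <= kermx (conjT M))%MS.
  apply/sub_kermxP/row_matrixP => k; rewrite row0 row_mul.
  set u := row k _; have u_ker : u *m (conjT M *m M) = 0.
    by rewrite /u -row_mul mulmx_ker row0.
  apply: mulmx_conjT_eq0; rewrite conjT_mulmx conjTK !mulmxA.
  by rewrite -(mulmxA u) u_ker mul0mx.
have := mxrankS ker_sub; rewrite !mxrank_ker mxrank_conjT.
by have := rank_leq_col M; have := rank_leq_col (conjT M *m M); lia.
Qed.

Lemma conjT_mul_self_ge0 m (u : 'cV[C]_m) : 0 <= (conjT u *m u) 0 0.
Proof. by rewrite mxE sumr_ge0 // => j _; rewrite !mxE mulrC mul_conjC_ge0. Qed.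

(* One step of Gaussian elimination on the Gram matrix (a Schur complement):
   [W] is [V] with its component along [u] removed. *)
Lemma det_gram_row_mx m k (u : 'cV[C]_m) (V : 'M[C]_(m, k)) (a : C) :
  conjT u *m u = a%:M -> a != 0 ->
  let W := V - a^-1 *: (u *m (conjT u *m V)) in
  \det (conjT (row_mx u V) *m row_mx u V) = a * \det (conjT W *m W).
Proof.
move=> uu_a a_neq0 W.
have a_real : a \is Num.real.
  have -> : a = (conjT u *m u) 0 0 by rewrite uu_a mxE mulr1n.
  by rewrite ger0_real ?conjT_mul_self_ge0.
set b := conjT u *m V; set c := conjT V *m u; set d := conjT V *m V.
have bc : conjT b = c by rewrite conjT_mulmx conjTK.
have schur : d - a^-1 *: (c *m b) = conjT W *m W.
  rewrite /W conjTB conjTZ conjT_mulmx bc rmorphV ?unitfE //= conj_Creal //.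
  rewrite mulmxBl !mulmxBr -!scalemxAl -!scalemxAr !mulmxA -/d.
  rewrite -(mulmxA c (conjT u) u) uu_a mul_mx_scalar -!scalemxAl !scalerA mulVf // mulr1.
  by rewrite -/c subrr subr0.
rewrite /conjT map_row_mx tr_row_mx -!/(conjT _) mul_col_row -/b -/c -/d.
have -> : block_mx (conjT u *m u) b c d =
    block_mx 1%:M 0 (a^-1 *: c) 1%:M *m block_mx a%:M b 0 (d - a^-1 *: (c *m b)).
  rewrite mulmx_block !mul1mx !mul0mx !addr0 uu_a mul_mx_scalar.
  by rewrite scalerA mulfV // scale1r -scalemxAl addrC subrK.
by rewrite det_mulmx det_lblock det_ublock !det1 !mul1r det_scalar1 schur.
Qed.

Lemma det_gram_ge0 m k (B : 'M[C]_(m, k)) : 0 <= \det (conjT B *m B).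
Proof.
elim: k m B => [|k IH] m B; first by rewrite det_mx00.
move: B; rewrite -[k.+1]/(1 + k)%N => B; rewrite -[B]hsubmxK.
set u := lsubmx _; set V := rsubmx _.
have [uu0 | uu_neq0] := eqVneq (conjT u *m u) 0.
  have u0 : u = 0.
    by rewrite -[u]conjTK (mulmx_conjT_eq0 (v := conjT u)) ?conjTK ?conjT0.
  have -> : conjT (row_mx u V) = col_mx (conjT u) (conjT V).
    by rewrite /conjT map_row_mx tr_row_mx.
  by rewrite mul_col_row u0 !mulmx0 det_ublock det_mx11 mxE mul0r.
rewrite (det_gram_row_mx _ (mx11_scalar _)).
  by rewrite mulr_ge0 ?conjT_mul_self_ge0.
by move: uu_neq0; apply: contra_neq => uu0; rewrite [LHS]mx11_scalar uu0 raddf0.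
Qed.

Lemma principal_minor_gram m n (A : 'M[C]_(m, n)) (S : {set 'I_n}) :
  principal_minor (conjT A *m A) S =
  \det (conjT (colsub (fun k : 'I_#|S| => enum_val k) A) *m
        colsub (fun k : 'I_#|S| => enum_val k) A).
Proof.
rewrite /principal_minor mxsub_mul; congr (\det (_ *m _)).
by apply/matrixP => a b; rewrite !mxE.
Qed.

Lemma principal_minor_gram_ge0 m n (A : 'M[C]_(m, n)) (S : {set 'I_n}) :
  0 <= principal_minor (conjT A *m A) S.
Proof. by rewrite principal_minor_gram det_gram_ge0. Qed.

Lemma exists_principal_minor_gram_neq0 m n (A : 'M[C]_(m, n)) :
  exists2 S : {set 'I_n}, #|S| = \rank A & principal_minor (conjT A *m A) S != 0.
Proof.
pose f := maxrankfun A^T; pose S := [set f k | k : 'I_(\rank A^T)].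
have card_S : #|S| = \rank A.
  by rewrite card_imset ?card_ord ?mxrank_tr //; apply: maxrankfun_inj.
exists S => //; rewrite principal_minor_gram.
set e := fun k : 'I_#|S| => enum_val k.
rewrite -unitfE -unitmxE -row_free_unit /row_free mxrank_gram.
have -> : \rank (colsub e A) = \rank (rowsub e A^T).
  by rewrite -mxrank_tr; congr (\rank _); apply/matrixP => a b; rewrite !mxE.
have f_sub_e : (rowsub f A^T <= rowsub e A^T)%MS.
  apply/row_subP => k; rewrite row_rowsub.
  have fk_S : f k \in S by apply: imset_f.
  by rewrite -(enum_rankK_in fk_S fk_S) -row_rowsub row_sub.
rewrite eqn_leq rank_leq_row; apply: leq_trans (mxrankS f_sub_e).
by rewrite (eq_maxrowsub A^T) mxrank_tr card_S.
Qed.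

Lemma sum_principal_minors_gram_gt0 m n (A : 'M[C]_(m, n)) :
  0 < \sum_(S : {set 'I_n} | #|S| == \rank A) principal_minor (conjT A *m A) S.
Proof.
have [S0 /eqP card_S0 S0_neq0] := exists_principal_minor_gram_neq0 A.
rewrite (bigD1 S0) //= ltr_pwDl ?sumr_ge0 // => [|S _].
  by rewrite lt0r S0_neq0 principal_minor_gram_ge0.
exact: principal_minor_gram_ge0.
Qed.

End GramMatrices.

Section LeastSquares.
Variable C : numClosedFieldType.

Lemma frob2E m n (M : 'M[C]_(m, n)) : frob2 M = \tr (conjT M *m M).
Proof.
rewrite /frob2 /mxtrace exchange_big; apply: eq_bigr => j _; rewrite mxE.
by apply: eq_bigr => i _; rewrite !mxE normCKC.
Qed.

Lemma frob2_ge0 m n (M : 'M[C]_(m, n)) : 0 <= frob2 M.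
Proof. by rewrite !sumr_ge0 // => i _; rewrite sumr_ge0 // => j _; rewrite exprn_ge0. Qed.

Lemma frob2_eq0 m n (M : 'M[C]_(m, n)) : frob2 M <= 0 -> M = 0.
Proof.
move=> M_le0; have M_eq0 : frob2 M = 0 by apply/le_anti; rewrite M_le0 frob2_ge0.
have sq_ge0 i j : 0 <= `|M i j| ^+ 2 by rewrite exprn_ge0.
have row_ge0 i : 0 <= \sum_j `|M i j| ^+ 2 by rewrite sumr_ge0.
apply/matrixP => i j; rewrite mxE; apply/eqP.
move: (psumr_eq0P (fun i _ => row_ge0 i) M_eq0) => /(_ i isT).
move/(psumr_eq0P (fun j _ => sq_ge0 i j))/(_ j isT)/eqP.
by rewrite sqrf_eq0 normr_eq0.
Qed.

Lemma frob2D_orth m n (M N : 'M[C]_(m, n)) :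
  conjT M *m N = 0 -> frob2 (M + N) = frob2 M + frob2 N.
Proof.
move=> MN0; have NM0 : conjT N *m M = 0.
  by rewrite -[M]conjTK -conjT_mulmx MN0 conjT0.
rewrite !frob2E conjTD mulmxDl !mulmxDr MN0 NM0.
by rewrite addr0 add0r mxtraceD.
Qed.

Lemma gram_normal_eq_solvable m n s (A : 'M[C]_(m, n)) (B : 'M[C]_(m, s)) :
  exists W : 'M[C]_(m, s), conjT A *m A *m (conjT A *m W) = conjT A *m B.
Proof.
have rank_GA : \rank (conjT A *m A *m conjT A) = \rank (conjT A).
  apply/eqP; rewrite eqn_leq mxrankM_maxr /=.
  apply: (leq_trans _ (mxrankM_maxr A _)); rewrite !mulmxA -mulmxA.
  have AA_herm : conjT (A *m conjT A) = A *m conjT A by rewrite conjT_mulmx conjTK.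
  rewrite -{1}AA_herm (mxrank_gram (A *m conjT A)).
  by rewrite -{2}[A]conjTK (mxrank_gram (conjT A)).
have GA_sub : ((conjT A *m A *m conjT A)^T <= (conjT A)^T)%MS.
  by rewrite -mulmxA trmx_mul submxMl.
have sub_GA : ((conjT A)^T <= (conjT A *m A *m conjT A)^T)%MS.
  by rewrite -(mxrank_leqif_sup GA_sub).2 mxrank_tr rank_GA /conjT !mxrank_tr.
have AB_sub : ((conjT A *m B)^T <= (conjT A *m A *m conjT A)^T)%MS.
  by rewrite trmx_mul (submx_trans (submxMl _ _) sub_GA).
have [D def_AB] := submxP AB_sub.
by exists D^T; rewrite mulmxA -[LHS]trmxK trmx_mul trmxK -def_AB trmxK.
Qed.

Lemma min_norm_LS_range m n s (A : 'M[C]_(m, n)) (B : 'M[C]_(m, s)) X W :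
  is_min_norm_LS A B X -> conjT A *m A *m (conjT A *m W) = conjT A *m B ->
  X = conjT A *m W.
Proof.
case=> X_LS X_min normal_eq; set Y := conjT A *m W.
have res_orth : conjT (A *m Y - B) *m A = 0.
  rewrite -[A in _ *m A]conjTK -conjT_mulmx mulmxBr mulmxA normal_eq subrr.
  exact: conjT0.
have pythagoras Z :
    frob2 (A *m Z - B) = frob2 (A *m Y - B) + frob2 (A *m (Z - Y)).
  rewrite -frob2D_orth; last by rewrite mulmxA res_orth mul0mx.
  by congr (frob2 _); rewrite mulmxBr [RHS]addrC addrA subrK.
have err_ge Z : frob2 (A *m Y - B) <= frob2 (A *m Z - B).
  by rewrite (pythagoras Z) lerDl frob2_ge0.
have AXY0 : A *m (X - Y) = 0.
  by apply: frob2_eq0; have := X_LS Y; rewrite (pythagoras X) gerDl.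
have := X_min Y err_ge; rewrite -[X](subrK Y) addrC frob2D_orth ?gerDl.
  by move/frob2_eq0 ->; rewrite addr0.
by rewrite /Y conjT_mulmx conjTK -mulmxA AXY0 mulmx0.
Qed.

End LeastSquares.

Lemma min_norm_LS_minors (C : numClosedFieldType) m n s (A : 'M[C]_(m, n))
    (B : 'M[C]_(m, s)) (X : 'M[C]_(n, s)) :
  is_min_norm_LS A B X -> forall i j,
  X i j =
    (\sum_(S : {set 'I_n} | (#|S| == \rank A) && (i \in S))
       principal_minor (replace_col (conjT A *m A) i (col j (conjT A *m B))) S)
    / (\sum_(S : {set 'I_n} | #|S| == \rank A) principal_minor (conjT A *m A) S).
Proof.
move=> X_min i j; have [W normal_eq] := gram_normal_eq_solvable A B.
have X_range := min_norm_LS_range X_min normal_eq.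
have col_rhs : col j (conjT A *m B) = conjT A *m A *m col j X.
  by rewrite -normal_eq -X_range !colE mulmxA.
rewrite col_rhs -sum_principal_minors_replace_col ?rank_leq_col //.
  by rewrite mxE mulrC mulKf // lt0r_neq0 // sum_principal_minors_gram_gt0.
move=> S card_S; rewrite X_range colE -mulmxA replace_col_mulmx.
by rewrite principal_minor_mulmx_rank // mxrank_conjT card_S.
Qed.

Local Open Scope complex_scope.

Theorem theorem4p1 (R : realType) (m n s : nat)
  (A : 'M[R[i]]_(m, n)) (B : 'M[R[i]]_(m, s)) (X : 'M[R[i]]_(n, s)) :
  is_min_norm_LS A B X ->
  (forall r : nat, \rank A = r -> (r <= m)%N -> (m < n)%N ->
     forall (i : 'I_n) (j : 'I_s),
       X i j =
         (\sum_(beta : {set 'I_n} | (#|beta| == r) && (i \in beta))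
             pminor (col_repl (conjT A *m A) i (col j (conjT A *m B))) beta)
         / (\sum_(beta : {set 'I_n} | #|beta| == r) pminor (conjT A *m A) beta))
  /\
  (\rank A = n ->
     forall (i : 'I_n) (j : 'I_s),
       X i j = \det (col_repl (conjT A *m A) i (col j (conjT A *m B)))
               / \det (conjT A *m A)).
Proof.
move=> X_min; split=> [r <- _ _ | rank_n] i j; first exact: min_norm_LS_minors.
have full_i (S : {set 'I_n}) : (#|S| == n) && (i \in S) = (S == setT).
  by rewrite card_set_ord_eq andb_idr // => /eqP ->; rewrite in_setT.
rewrite (min_norm_LS_minors X_min) rank_n (big_pred1 setT full_i).
by rewrite (big_pred1 setT (@card_set_ord_eq n)) !principal_minor_setT.
Qed.
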